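(* Let $D_6=\langle r,s\mid r^6=s^2=1,\ srs=r^{-1}\rangle$ be the dihedral group of order $12$. Its subgroups up to conjugacy are $\{1\}$, three classes of subgroups of order 2, $C_2^{(1)},C_2^{(2)},C_2^{(3)}$ (represented by $\langle r^3\rangle,\langle s\rangle,\langle rs\rangle$), $C_3=\langle r^2\rangle$, $C_2^2=\langle r^3,s\rangle$, $C_6=\langle r\rangle$, two classes of subgroups isomorphic to $S_3$, $S_3^{(1)}=\langle r^2,s\rangle$ and $S_3^{(2)}=\langle r^2,rs\rangle$, and $D_6$. Then there is an isomorphism of $D_6$-lattices $$\mathbb{Z}[D_6]\oplus\mathbb{Z}[D_6/C_2^2]^{\oplus2}\oplus\mathbb{Z}[D_6/C_6]\oplus\mathbb{Z}[D_6/S_3^{(1)}]\oplus\mathbb{Z}[D_6/S_3^{(2)}]\simeq\mathbb{Z}[D_6/C_2^{(1)}]\oplus\mathbb{Z}[D_6/C_2^{(2)}]\oplus\mathbb{Z}[D_6/C_2^{(3)}]\oplus\mathbb{Z}[D_6/C_3]\oplus\mathbb{Z}^{\oplus2}.$$ In particular the Krull–Schmidt theorem fails for permutation $D_6$-lattices. *)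

From HB Require Import structures.
From mathcomp Require Import all_boot all_order all_algebra all_fingroup.
Set Implicit Arguments. Unset Strict Implicit. Unset Printing Implicit Defensive.
Import GRing.Theory.

(* Permutation lattices  Z[G/H_0] (+) ... (+) Z[G/H_{k-1}].            *)
(* The underlying G-set is the disjoint union of the left coset spaces *)
(* G/H_i, i.e. pairs (i, xH_i) with x in G; G acts by g.(i,A) = (i,gA).*)

Definition pl_pt (gT : finGroupType) (G : {set gT}) (Hs : seq {set gT}) :=
  {p : 'I_(size Hs) * {set gT} | p.2 \in lcosets (nth set0 Hs p.1) G}.

(* action of g on the G-set (the identity fallback is never used for g in G) *)
Definition pl_act (gT : finGroupType) (G : {set gT}) (Hs : seq {set gT})
    (g : gT) (p : pl_pt G Hs) : pl_pt G Hs :=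
  odflt p (insub ((val p).1, (g *: (val p).2)%g)).

Definition perm_lattice (gT : finGroupType) (G : {set gT}) (Hs : seq {set gT}) :=
  {ffun pl_pt G Hs -> int}.

Definition pl_gact (gT : finGroupType) (G : {set gT}) (Hs : seq {set gT})
    (g : gT) (f : perm_lattice G Hs) : perm_lattice G Hs :=
  [ffun p => f (pl_act (g^-1)%g p)].

Definition G_lattice_iso (gT : finGroupType) (G : {set gT})
    (Hs Ks : seq {set gT}) : Prop :=
  exists phi : perm_lattice G Hs -> perm_lattice G Ks,
    [/\ (forall f1 f2, phi (f1 + f2)%R = (phi f1 + phi f2)%R),
        bijective phi &
        (forall g, g \in G -> forall f, phi (pl_gact g f) = pl_gact g (phi f))].

Definition rot_fun (i : 'I_6) : 'I_6 := (i + 1)%R.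
Lemma rot_inj : injective rot_fun. Proof. exact: addIr. Qed.
Definition refl_fun (i : 'I_6) : 'I_6 := (- i)%R.
Lemma refl_inj : injective refl_fun. Proof. exact: oppr_inj. Qed.

Definition r6 : {perm 'I_6} := perm rot_inj.
Definition s6 : {perm 'I_6} := perm refl_inj.

Definition D6 : {set {perm 'I_6}} := <<[set r6; s6]>>%g.

From HB Require Import structures.
From mathcomp Require Import all_boot all_order all_algebra all_fingroup zify.
Set Implicit Arguments. Unset Strict Implicit. Unset Printing Implicit Defensive.
Import GRing.Theory.

(* A Z-linear map between two permutation lattices Z[X] -> Z[Y] is an integer
   matrix indexed by Y x X; it commutes with the action of G exactly when the
   matrix is invariant under the diagonal action of G, and it is bijective as
   soon as the matrix has an integer inverse (Lemmas [kernel_iso], [table_iso]).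
   The theorem is therefore proved by exhibiting an explicit 24 x 24 integer
   matrix M together with its inverse N, and checking by evaluation that
   M N = 1, N M = 1, and that M is D6-invariant.

   To make these checks computable, elements of D6 are coded by the numbers
   0..11 (d codes r^(d mod 6) s^(d div 6)), subgroups by the list of codes of
   their elements (obtained by closing a list of generators), and the points of
   the disjoint union of coset spaces by pairs (summand, coset representative). *)

Local Open Scope ring_scope.

Definition kernel_map (X Y : finType) (M : Y -> X -> int) (f : {ffun X -> int}) :
    {ffun Y -> int} :=
  [ffun y => \sum_x M y x * f x].

Section IntegerKernels.
Variables X Y : finType.

Lemma kernel_mapD (M : Y -> X -> int) f1 f2 :
  kernel_map M (f1 + f2) = kernel_map M f1 + kernel_map M f2.
Proof.
apply/ffunP => y; rewrite !ffunE -big_split /=.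
by apply: eq_bigr => x _; rewrite ffunE mulrDr.
Qed.

Lemma kernel_mapK (M : Y -> X -> int) (N : X -> Y -> int) :
  (forall x x', \sum_y N x y * M y x' = (x == x')%:R) ->
  cancel (kernel_map M) (kernel_map N).
Proof.
move=> NM f; apply/ffunP => x; rewrite ffunE.
under eq_bigr do rewrite ffunE big_distrr.
rewrite exchange_big /= (eq_bigr (fun x' => (x == x')%:R * f x')) => [|x' _].
  rewrite (bigD1 x) //= eqxx mul1r big1 ?addr0 // => x' /negbTE.
  by rewrite eq_sym => ->; rewrite mul0r.
by rewrite -NM big_distrl; apply: eq_bigr => y _; rewrite mulrA.
Qed.
End IntegerKernels.

Section PermutationLattices.
Variables (gT : finGroupType) (G : {group gT}) (Hs Ks : seq {set gT}).
Local Notation X := (pl_pt G Hs).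
Local Notation Y := (pl_pt G Ks).

Lemma pl_actE (Ls : seq {set gT}) g (p : pl_pt G Ls) :
  g \in G -> val (pl_act g p) = ((val p).1, (g *: (val p).2)%g).
Proof.
move=> gG; rewrite /pl_act; case: insubP => [u _ -> //|/negP[]].
case: p => [[i C] /= /lcosetsP[x xG ->]]; apply/lcosetsP.
by exists (g * x)%g; rewrite ?groupM // lcosetM.
Qed.

Lemma pl_actK (Ls : seq {set gT}) g :
  g \in G -> cancel (@pl_act gT G Ls g) (pl_act g^-1).
Proof.
move=> gG p; apply: val_inj; rewrite !pl_actE ?groupV //=.
by rewrite -lcosetM mulVg lcoset1; case: (val p).
Qed.

Lemma kernel_iso (M : Y -> X -> int) (N : X -> Y -> int) :
  (forall g, g \in G -> forall y x, M (pl_act g y) (pl_act g x) = M y x) ->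
  (forall y y', \sum_x M y x * N x y' = (y == y')%:R) ->
  (forall x x', \sum_y N x y * M y x' = (x == x')%:R) ->
  G_lattice_iso G Hs Ks.
Proof.
move=> Minv MN NM; exists (kernel_map M); split.
- exact: kernel_mapD.
- by exists (kernel_map N); apply: kernel_mapK.
move=> g gG f; apply/ffunP => y; rewrite !ffunE.
rewrite (reindex_inj (can_inj (pl_actK gG))) /=.
apply: eq_bigr => x _; rewrite ffunE pl_actK //.
by rewrite -(Minv _ (groupVr gG)) pl_actK.
Qed.

Lemma table_iso m n (eX : 'I_m -> X) (eY : 'I_n -> Y) (M N : nat -> nat -> int) :
  bijective eX -> bijective eY ->
  (forall g, g \in G -> exists sX sY,
     [/\ forall a, pl_act g (eX a) = eX (sX a),
         forall b, pl_act g (eY b) = eY (sY b) &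
         forall a b, M (sY b) (sX a) = M b a]) ->
  (forall b b' : 'I_n, \sum_(a < m) M b a * N a b' = (b == b')%:R) ->
  (forall a a' : 'I_m, \sum_(b < n) N a b * M b a' = (a == a')%:R) ->
  G_lattice_iso G Hs Ks.
Proof.
move=> bX bY Minv MN NM; case: (bX) => iX eXK iXK; case: (bY) => iY eYK iYK.
apply: (kernel_iso (M := fun y x => M (iY y) (iX x)) (N := fun x y => N (iX x) (iY y))).
- move=> g gG y x; have [sX [sY [eXs eYs Ms]]] := Minv g gG.
  by rewrite -(iYK y) -(iXK x) eXs eYs !eXK !eYK Ms.
- move=> y y'; rewrite (reindex eX) /=; last exact: onW_bij.
  under eq_bigr do rewrite eXK.
  by rewrite MN (inj_eq (can_inj iYK)).
- move=> x x'; rewrite (reindex eY) /=; last exact: onW_bij.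
  under eq_bigr do rewrite eYK.
  by rewrite NM (inj_eq (can_inj iXK)).
Qed.
End PermutationLattices.

Local Close Scope ring_scope.
Local Open Scope group_scope.

Definition dih (d : nat) : {perm 'I_6} := r6 ^+ (d %% 6) * s6 ^+ (d %/ 6).

(* Multiplication and inversion on codes, from s r^c = r^-c s. *)
Definition dmul (x y : nat) : nat :=
  (x %% 6 + (if x %/ 6 == 0 then y %% 6 else 6 - y %% 6)) %% 6
  + 6 * ((x %/ 6 + y %/ 6) %% 2).

Definition dinv (x : nat) : nat := if x %/ 6 == 0 then (6 - x %% 6) %% 6 else x.

Definition dih_act (d i : nat) : nat :=
  let j := (i + d %% 6) %% 6 in if d %/ 6 == 0 then j else (6 - j) %% 6.

Lemma all_iotaP n (P : pred nat) : all P (iota 0 n) -> forall i, i < n -> P i.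
Proof. by move/allP=> h i lt_in; apply: h; rewrite mem_iota. Qed.

Lemma dmul_lt x y : dmul x y < 12.
Proof.
rewrite /dmul; set u := (_ + _)%N.
by have := ltn_pmod u (isT : 0 < 6); have := ltn_pmod (x %/ 6 + y %/ 6) (isT : 0 < 2); lia.
Qed.

Lemma dinv_lt x : x < 12 -> dinv x < 12.
Proof. by rewrite /dinv; case: ifP => // _ _; rewrite (@ltn_trans 6) ?ltn_pmod. Qed.

Lemma dih_actE d (i : 'I_6) : d < 12 -> val (dih d i) = dih_act d (val i).
Proof.
move=> d_lt; rewrite /dih permM !permX /dih_act.
have r6_iter k (j : 'I_6) : val (iter k r6 j) = (val j + k) %% 6.
  elim: k => [|k IH] /=; first by rewrite addn0 modn_small.
  by rewrite permE /= IH modnDml addn1 addnS.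
have : d %/ 6 < 2 by rewrite ltn_divLR.
by case: (d %/ 6) => [|[|//]] _ /=; rewrite ?permE /= r6_iter.
Qed.

(* Since D6 acts faithfully on the hexagon, the group law on codes can be
   checked on the action. *)
Lemma dmul_act_check : all (fun x => all (fun y => all (fun i =>
  dih_act (dmul x y) i == dih_act y (dih_act x i)) (iota 0 6)) (iota 0 12)) (iota 0 12).
Proof. by vm_compute. Qed.

Lemma dihM x y : x < 12 -> y < 12 -> dih x * dih y = dih (dmul x y).
Proof.
move=> x_lt y_lt; apply/permP => i; apply: val_inj.
rewrite permM !dih_actE ?dmul_lt //; apply/esym/eqP.
exact: (all_iotaP (all_iotaP (all_iotaP dmul_act_check x_lt) y_lt) (ltn_ord i)).
Qed.

Lemma dih_faithful_check : all (fun x => all (fun y =>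
  (dih_act x 0 == dih_act y 0) && (dih_act x 1 == dih_act y 1) ==> (x == y))
  (iota 0 12)) (iota 0 12).
Proof. by vm_compute. Qed.

Lemma dih_inj x y : x < 12 -> y < 12 -> dih x = dih y -> x = y.
Proof.
move=> x_lt y_lt exy.
have e0 := congr1 (fun p : {perm 'I_6} => val (p ord0)) exy.
have e1 := congr1 (fun p : {perm 'I_6} => val (p (Ordinal (isT : 1 < 6)))) exy.
move: e0 e1 => /=; rewrite !dih_actE // => e0 e1.
by apply/eqP; move: (all_iotaP (all_iotaP dih_faithful_check x_lt) y_lt); rewrite e0 e1 !eqxx.
Qed.

Lemma dih0 : dih 0 = 1. Proof. by rewrite /dih !expg0 mulg1. Qed.

Lemma dinv_check : all (fun x => dmul x (dinv x) == 0) (iota 0 12).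
Proof. by vm_compute. Qed.

Lemma dihV x : x < 12 -> (dih x)^-1 = dih (dinv x).
Proof.
move=> x_lt; apply/eqP; rewrite eq_invg_mul dihM ?dinv_lt //.
by rewrite (eqP (all_iotaP dinv_check x_lt)) dih0.
Qed.

Lemma dih_D6 d : dih d \in D6.
Proof. by rewrite /dih groupM // groupX // mem_gen // !inE eqxx ?orbT. Qed.

Definition code_subgroup (gl : seq nat) : {set {perm 'I_6}} :=
  <<[set x | x \in map dih gl]>>.

Lemma code_subgroup0 : code_subgroup [::] = 1.
Proof. by rewrite -gen0; congr <<_>>; apply/setP => x; rewrite !inE. Qed.

Lemma code_subgroup1 a : code_subgroup [:: a] = <[dih a]>.
Proof. by congr <<_>>; apply/setP => x; rewrite !inE ?orbF. Qed.

Lemma code_subgroup2 a b : code_subgroup [:: a; b] = <<[set dih a; dih b]>>.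
Proof. by congr <<_>>; apply/setP => x; rewrite !inE ?orbF. Qed.

Definition closed_under (R gl : seq nat) : bool :=
  all (fun x => all (fun g => dmul x g \in R) gl) R.

Fixpoint gen_closure (gl : seq nat) (k : nat) : seq nat :=
  if k is k'.+1 then
    let R := gen_closure gl k' in undup (R ++ [seq dmul x g | x <- R, g <- gl])
  else [:: 0].

Lemma code_subgroupP gl (R : seq nat) :
  all (fun g => g < 12) gl -> 0 \in R -> all (fun x => x < 12) R ->
  closed_under R gl ->
  forall x, x \in code_subgroup gl -> exists2 e, e \in R & x = dih e.
Proof.
move=> gl_lt R0 R_lt R_closed x /gen_prodgP[n [c c_gen ->]].
elim: n c c_gen => [|n IH] c c_gen; first by exists 0; rewrite // big_ord0 dih0.
rewrite big_ord_recr /=.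
have [e eR ->] := IH (fun i => c (widen_ord (leqnSn n) i)) (fun i => c_gen _).
have /[!inE] /mapP[g gl_g ->] := c_gen ord_max.
exists (dmul e g); first by have /allP := allP R_closed e eR; apply.
by rewrite dihM ?(allP R_lt e eR) ?(allP gl_lt g gl_g).
Qed.

Lemma gen_closure_sub gl k e : all (fun g => g < 12) gl ->
  e \in gen_closure gl k -> (e < 12) && (dih e \in code_subgroup gl).
Proof.
move=> gl_lt; elim: k e => [|k IH] e /=.
  by rewrite inE => /eqP ->; rewrite dih0 group1.
rewrite mem_undup mem_cat => /orP[/IH //|/allpairsP[[x g] [/= /IH/andP[x_lt xH] gl_g ->]]].
rewrite dmul_lt -dihM ?(allP gl_lt g gl_g) // groupM // mem_gen //.
by rewrite inE map_f.
Qed.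

Lemma mem_code_subgroup gl d :
  all (fun g => g < 12) gl -> closed_under (gen_closure gl 12) gl -> d < 12 ->
  (dih d \in code_subgroup gl) = (d \in gen_closure gl 12).
Proof.
move=> gl_lt closed d_lt; apply/idP/idP => [dH|/(gen_closure_sub gl_lt)/andP[] //].
have R0 : 0 \in gen_closure gl 12.
  by elim: 12 => [|k IH] //=; rewrite mem_undup mem_cat IH.
have R_lt : all (fun x => x < 12) (gen_closure gl 12).
  by apply/allP => x /(gen_closure_sub gl_lt)/andP[].
have [e eR /dih_inj ede] := code_subgroupP gl_lt R0 R_lt closed dH.
by rewrite ede ?(allP R_lt e eR).
Qed.

Lemma D6_dih x : x \in D6 -> exists2 e, e < 12 & x = dih e.
Proof.
have -> : D6 = code_subgroup [:: 1%N; 6].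
  by rewrite code_subgroup2 /dih /= !expg0 expg1 mulg1 mul1g expg1.
have R_closed : closed_under (iota 0 12) [:: 1%N; 6].
  by apply/allP => y _; apply/allP => g _; rewrite mem_iota dmul_lt.
move=> /(@code_subgroupP [:: 1%N; 6] (iota 0 12) isT isT _ R_closed)[|e].
  by apply/allP => y; rewrite mem_iota.
by rewrite mem_iota; exists e.
Qed.

Definition subgroups_ok (gens mems : seq (seq nat)) : bool :=
  (mems == [seq gen_closure gl 12 | gl <- gens]) &&
  all (fun gl => all (fun g => g < 12) gl && closed_under (gen_closure gl 12) gl) gens.

Definition same_coset (mems : seq (seq nat)) (i d e : nat) : bool :=
  dmul (dinv d) e \in nth [::] mems i.

Definition transversal (H : seq nat) : seq nat :=
  foldl (fun reps d => if has (fun e => dmul (dinv e) d \in H) reps then reps else rcons reps d)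
    [::] (iota 0 12).

Definition coset_points (mems : seq (seq nat)) : seq (nat * nat) :=
  flatten [seq [seq (i, d) | d <- transversal (nth [::] mems i)] | i <- iota 0 (size mems)].

Definition summand (pts : seq (nat * nat)) (a : nat) : nat := (nth (0, 0) pts a).1.
Definition rep (pts : seq (nat * nat)) (a : nat) : nat := (nth (0, 0) pts a).2.

Definition coset_enumeration (mems : seq (seq nat)) (pts : seq (nat * nat)) : bool :=
  [&& all (fun p => (p.1 < size mems) && (p.2 < 12)) pts,
      all (fun a => all (fun b => (summand pts a == summand pts b) &&
            same_coset mems (summand pts a) (rep pts a) (rep pts b) ==> (a == b))
        (iota 0 (size pts))) (iota 0 (size pts)) &
      all (fun i => all (fun d => has (fun a => (summand pts a == i) &&
            same_coset mems i (rep pts a) d) (iota 0 (size pts))) (iota 0 12))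
        (iota 0 (size mems))].

Definition shift_index (mems : seq (seq nat)) (pts : seq (nat * nat)) (c a : nat) : nat :=
  find (fun b => (summand pts b == summand pts a) &&
                 same_coset mems (summand pts a) (rep pts b) (dmul c (rep pts a)))
       (iota 0 (size pts)).

Section CosetEnumeration.
Variables (gens mems : seq (seq nat)) (pts : seq (nat * nat)).
Hypothesis subgroups : subgroups_ok gens mems.
Hypothesis enumeration : coset_enumeration mems pts.

Local Notation Hs := (map code_subgroup gens).
Local Notation n := (size pts).

Lemma size_Hs : size Hs = size mems.
Proof. by case/andP: subgroups => /eqP -> _; rewrite !size_map. Qed.

Lemma nth_Hs i : i < size Hs -> nth set0 Hs i = code_subgroup (nth [::] gens i).
Proof. by rewrite size_map => i_lt; rewrite (nth_map [::]). Qed.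

Lemma mem_nth_Hs i d : i < size Hs -> d < 12 ->
  (dih d \in nth set0 Hs i) = (d \in nth [::] mems i).
Proof.
move=> i_lt d_lt; rewrite nth_Hs //; rewrite size_map in i_lt.
case/andP: subgroups => /eqP -> /allP gens_ok.
have /andP[gl_lt gl_closed] := gens_ok _ (mem_nth [::] i_lt).
by rewrite mem_code_subgroup // (nth_map [::]).
Qed.

Lemma point_wf a : a < n -> (summand pts a < size Hs) && (rep pts a < 12).
Proof.
move=> a_lt; rewrite size_Hs; case/and3P: enumeration => /allP wf _ _.
exact: wf _ (mem_nth _ a_lt).
Qed.

Lemma summand_lt (a : 'I_n) : summand pts a < size Hs.
Proof. by case/andP: (point_wf (ltn_ord a)). Qed.

Lemma rep_lt (a : 'I_n) : rep pts a < 12.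
Proof. by case/andP: (point_wf (ltn_ord a)). Qed.

Lemma coset_eq i d e : i < size Hs -> d < 12 -> e < 12 ->
  (dih d *: nth set0 Hs i == dih e *: nth set0 Hs i) = same_coset mems i d e.
Proof.
move=> i_lt d_lt e_lt; rewrite /same_coset -mem_nth_Hs ?dmul_lt //.
rewrite -dihM ?dinv_lt // -dihV // -mem_lcoset nth_Hs // /code_subgroup.
by apply/eqP/lcoset_eqP => /esym.
Qed.

Definition pt_summand (a : 'I_n) : 'I_(size Hs) := Ordinal (summand_lt a).

Lemma pt_proof (a : 'I_n) :
  dih (rep pts a) *: nth set0 Hs (pt_summand a) \in lcosets (nth set0 Hs (pt_summand a)) D6.
Proof. by apply/lcosetsP; exists (dih (rep pts a)); rewrite ?dih_D6. Qed.

Definition pt (a : 'I_n) : pl_pt D6 Hs :=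
  exist _ (pt_summand a, dih (rep pts a) *: nth set0 Hs (pt_summand a)) (pt_proof a).

Lemma pt_inj : injective pt.
Proof.
move=> a b /(congr1 val) [eq_ab eq_coset].
have : same_coset mems (summand pts a) (rep pts a) (rep pts b).
  by rewrite -coset_eq ?summand_lt ?rep_lt // eq_coset eq_ab.
case/and3P: enumeration => _ /all_iotaP distinct _ same.
move: (all_iotaP (distinct _ (ltn_ord a)) (ltn_ord b)).
by rewrite eq_ab eqxx -eq_ab same => /eqP /val_inj.
Qed.

Lemma pt_surj p : exists a, p = pt a.
Proof.
case: p => [[i C] /= hC]; have /lcosetsP[x /D6_dih[d d_lt ->] eC] := hC.
case/and3P: enumeration => _ _ /all_iotaP cover.
have /hasP[a] := all_iotaP (cover _ (leq_trans (ltn_ord i) (eq_leq size_Hs))) d_lt.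
rewrite mem_iota add0n => a_lt /andP[/eqP sa same].
exists (Ordinal a_lt); apply: val_inj => /=.
have -> : pt_summand (Ordinal a_lt) = i by apply: val_inj.
rewrite eC; congr (_, _); apply/eqP; rewrite sa eq_sym coset_eq //.
by case/andP: (point_wf a_lt).
Qed.

Lemma pt_bij : bijective pt.
Proof.
apply: inj_card_bij pt_inj _; rewrite -(card_codom pt_inj).
apply/subset_leq_card/subsetP => p _; have [a ->] := pt_surj p.
exact: codom_f.
Qed.

Lemma shift_indexP c (a : 'I_n) : c < 12 ->
  (shift_index mems pts c a < n) &&
  ((summand pts (shift_index mems pts c a) == summand pts a) &&
   same_coset mems (summand pts a) (rep pts (shift_index mems pts c a)) (dmul c (rep pts a))).
Proof.
move=> c_lt; case/and3P: enumeration => _ _ /all_iotaP cover.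
have found := all_iotaP (cover _ (leq_trans (summand_lt a) (eq_leq size_Hs))) (dmul_lt c (rep pts a)).
have found_lt := found; rewrite has_find size_iota in found_lt.
by have := nth_find 0 found; rewrite nth_iota // /shift_index found_lt.
Qed.

Definition pt_shift (c : nat) (a : 'I_n) : 'I_n := insubd a (shift_index mems pts c a).

Lemma pt_shiftE c a : c < 12 -> pl_act (dih c) (pt a) = pt (pt_shift c a).
Proof.
move=> c_lt; have /andP[s_lt /andP[/eqP s_summand s_coset]] := shift_indexP a c_lt.
apply: val_inj; rewrite pl_actE ?dih_D6 //=.
have sE : val (pt_shift c a) = shift_index mems pts c a by rewrite val_insubd s_lt.
have -> : pt_summand (pt_shift c a) = pt_summand a by apply: val_inj; rewrite /= sE.
congr (_, _); rewrite -lcosetM dihM ?rep_lt //; apply/eqP.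
by rewrite eq_sym sE s_summand coset_eq ?dmul_lt ?summand_lt //; case/andP: (point_wf s_lt).
Qed.
End CosetEnumeration.

Arguments pt_shift : clear implicits.

Local Open Scope ring_scope.

Definition mx_inverse_check (n m : nat) (M N : nat -> nat -> int) : bool :=
  all (fun b => all (fun b' =>
    foldr (fun a acc => M b a * N a b' + acc) 0 (iota 0 m) == (b == b')%:R)
  (iota 0 n)) (iota 0 n).

Lemma mx_inverse_checkP n m M N : mx_inverse_check n m M N ->
  forall b b' : 'I_n, \sum_(a < m) M b a * N a b' = (b == b')%:R.
Proof.
move=> MN b b'; rewrite -(big_mkord xpredT (fun a => M b a * N a b')) unlock.
have /eqP row_col := all_iotaP (all_iotaP MN (ltn_ord b)) (ltn_ord b').
by rewrite /reducebig /index_iota subn0 -val_eqE; exact row_col.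
Qed.

Definition table_invariant (memsH : seq (seq nat)) (ptsH : seq (nat * nat))
    (memsK : seq (seq nat)) (ptsK : seq (nat * nat)) (M : nat -> nat -> int) : bool :=
  all (fun c => all (fun a => all (fun b =>
      M (shift_index memsK ptsK c b) (shift_index memsH ptsH c a) == M b a)
    (iota 0 (size ptsK))) (iota 0 (size ptsH))) (iota 0 12).

Lemma D6_table_iso Hs Ks gensH memsH ptsH gensK memsK ptsK (M N : nat -> nat -> int) :
  Hs = map code_subgroup gensH -> Ks = map code_subgroup gensK ->
  subgroups_ok gensH memsH -> coset_enumeration memsH ptsH ->
  subgroups_ok gensK memsK -> coset_enumeration memsK ptsK ->
  table_invariant memsH ptsH memsK ptsK M ->
  mx_inverse_check (size ptsK) (size ptsH) M N ->
  mx_inverse_check (size ptsH) (size ptsK) N M ->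
  G_lattice_iso D6 Hs Ks.
Proof.
move=> -> -> subH enumH subK enumK Minv MN NM.
apply: (table_iso (G := <<[set r6; s6]>>%G) (pt_bij subH enumH) (pt_bij subK enumK))
  (mx_inverse_checkP MN) (mx_inverse_checkP NM).
move=> g /D6_dih[c c_lt ->].
exists (pt_shift memsH ptsH c), (pt_shift memsK ptsK c); split.
- by move=> a; apply: pt_shiftE.
- by move=> b; apply: pt_shiftE.
move=> a b; rewrite !val_insubd.
have /andP[-> _] := shift_indexP subH enumH a c_lt.
have /andP[-> _] := shift_indexP subK enumK b c_lt.
exact/eqP/(all_iotaP (all_iotaP (all_iotaP Minv c_lt) (ltn_ord a)) (ltn_ord b)).
Qed.

Local Close Scope ring_scope.

(* Generators of the subgroups on the two sides:
   1, C2^2 (twice), C6, S3^(1), S3^(2)   and   C2^(1), C2^(2), C2^(3), C3, D6, D6. *)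
Definition gensX : seq (seq nat) :=
  [:: [::]; [:: 3; 6]; [:: 3; 6]; [:: 1%N]; [:: 2; 6]; [:: 2; 7]].
Definition gensY : seq (seq nat) :=
  [:: [:: 3]; [:: 6]; [:: 7]; [:: 2]; [:: 1%N; 6]; [:: 1%N; 6]].

Definition memsX : seq (seq nat) := Eval vm_compute in [seq gen_closure gl 12 | gl <- gensX].
Definition memsY : seq (seq nat) := Eval vm_compute in [seq gen_closure gl 12 | gl <- gensY].

(* Both G-sets have 24 points. *)
Definition ptsX : seq (nat * nat) := Eval vm_compute in coset_points memsX.
Definition ptsY : seq (nat * nat) := Eval vm_compute in coset_points memsY.

Local Open Scope int_scope.

(* The isomorphism, as a matrix with rows indexed by ptsY and columns by ptsX,
   and its inverse. *)
Definition matrix_M : seq (seq int) :=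
  [:: [:: -1;  0;  1; -1;  0;  1; -2;  1; -1; -2;  1; -1;  0;  1;  0;  0;  0;  1;  0; -1;  0;  0;  0;  0];
      [::  1; -1;  0;  1; -1;  0; -1; -2;  1; -1; -2;  1;  0;  0;  1;  1;  0;  0;  0; -1;  0;  0;  0;  0];
      [::  0;  1; -1;  0;  1; -1;  1; -1; -2;  1; -1; -2;  1;  0;  0;  0;  1;  0;  0; -1;  0;  0;  0;  0];
      [:: -2; -1;  1; -2; -1;  1; -1;  1;  0; -1;  1;  0;  0;  0;  1;  0;  1;  0; -1;  0;  0;  0;  0;  0];
      [::  1; -2; -1;  1; -2; -1;  0; -1;  1;  0; -1;  1;  1;  0;  0;  0;  0;  1; -1;  0;  0;  0;  0;  0];
      [:: -1;  1; -2; -1;  1; -2;  1;  0; -1;  1;  0; -1;  0;  1;  0;  1;  0;  0; -1;  0;  0;  0;  0;  0];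
      [::  1; -1;  0;  1;  0;  0;  1;  0;  0;  1;  0; -1;  1; -2; -2; -1; -2; -2;  2;  2;  0; -1; -3; -3];
      [::  0;  1; -1;  0;  1;  0; -1;  1;  0;  0;  1;  0; -2;  1; -2; -2; -1; -2;  2;  2; -1;  0; -3; -3];
      [::  0;  0;  1; -1;  0;  1;  0; -1;  1;  0;  0;  1; -2; -2;  1; -2; -2; -1;  2;  2;  0; -1; -3; -3];
      [::  1;  0;  0;  1; -1;  0;  1;  0; -1;  1;  0;  0;  1; -2; -2; -1; -2; -2;  2;  2; -1;  0; -3; -3];
      [::  0;  1;  0;  0;  1; -1;  0;  1;  0; -1;  1;  0; -2;  1; -2; -2; -1; -2;  2;  2;  0; -1; -3; -3];
      [:: -1;  0;  1;  0;  0;  1;  0;  0;  1;  0; -1;  1; -2; -2;  1; -2; -2; -1;  2;  2; -1;  0; -3; -3];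
      [::  0;  0;  0;  0;  1;  0;  0;  0;  0;  1;  0;  0;  0;  0;  1; -1; -1;  1; -3; -3;  1;  1; -1;  0];
      [::  0;  0;  0;  0;  0;  1;  0;  0;  0;  0;  1;  0;  1;  0;  0;  1; -1; -1; -3; -3;  1;  1;  0; -1];
      [::  1;  0;  0;  0;  0;  0;  0;  0;  0;  0;  0;  1;  0;  1;  0; -1;  1; -1; -3; -3;  1;  1; -1;  0];
      [::  0;  1;  0;  0;  0;  0;  1;  0;  0;  0;  0;  0;  0;  0;  1; -1; -1;  1; -3; -3;  1;  1;  0; -1];
      [::  0;  0;  1;  0;  0;  0;  0;  1;  0;  0;  0;  0;  1;  0;  0;  1; -1; -1; -3; -3;  1;  1; -1;  0];
      [::  0;  0;  0;  1;  0;  0;  0;  0;  1;  0;  0;  0;  0;  1;  0; -1;  1; -1; -3; -3;  1;  1;  0; -1];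
      [::  0;  0;  0;  0;  0;  0; -1;  0; -1;  0; -1;  0;  0;  0;  0;  1;  1;  1;  1;  0;  0;  2;  1;  2];
      [::  0;  0;  0;  0;  0;  0;  0; -1;  0; -1;  0; -1;  0;  0;  0;  1;  1;  1;  1;  0;  2;  0;  2;  1];
      [:: -1;  0; -1;  0; -1;  0;  0;  0;  0;  0;  0;  0;  0;  0;  0;  1;  1;  1;  0;  1;  0;  2;  2;  1];
      [::  0; -1;  0; -1;  0; -1;  0;  0;  0;  0;  0;  0;  0;  0;  0;  1;  1;  1;  0;  1;  2;  0;  1;  2];
      [:: -1; -1; -1; -1; -1; -1; -1; -1; -1; -1; -1; -1;  1;  1;  1;  1;  1;  1;  0;  0; -1; -1;  0;  0];
      [:: -1; -1; -1; -1; -1; -1; -1; -1; -1; -1; -1; -1;  0;  0;  0;  1;  1;  1;  4;  4;  2;  2; -1; -1]].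

Definition matrix_N : seq (seq int) :=
  [:: [:: -136; -112; -133; -114; -140; -128;   19;   16;    6;   18;   16;    5;   38;   23;   26;   39;   23;   26;   50;   49;   50;   50;  276;  -29];
      [:: -133; -136; -112; -128; -114; -140;    5;   19;   16;    6;   18;   16;   26;   38;   23;   26;   39;   23;   49;   50;   50;   50;  276;  -29];
      [:: -112; -133; -136; -140; -128; -114;   16;    5;   19;   16;    6;   18;   23;   26;   38;   23;   26;   39;   50;   49;   50;   50;  276;  -29];
      [:: -136; -112; -133; -114; -140; -128;   18;   16;    5;   19;   16;    6;   39;   23;   26;   38;   23;   26;   49;   50;   50;   50;  276;  -29];
      [:: -133; -136; -112; -128; -114; -140;    6;   18;   16;    5;   19;   16;   26;   39;   23;   26;   38;   23;   50;   49;   50;   50;  276;  -29];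
      [:: -112; -133; -136; -140; -128; -114;   16;    6;   18;   16;    5;   19;   23;   26;   39;   23;   26;   38;   49;   50;   50;   50;  276;  -29];
      [:: -114; -128; -140; -136; -133; -112;   19;    5;   16;   18;    6;   16;   26;   23;   39;   26;   23;   38;   50;   50;   50;   49;  276;  -29];
      [:: -140; -114; -128; -112; -136; -133;   16;   19;    5;   16;   18;    6;   38;   26;   23;   39;   26;   23;   50;   50;   49;   50;  276;  -29];
      [:: -128; -140; -114; -133; -112; -136;    6;   16;   19;    5;   16;   18;   23;   38;   26;   23;   39;   26;   50;   50;   50;   49;  276;  -29];
      [:: -114; -128; -140; -136; -133; -112;   18;    6;   16;   19;    5;   16;   26;   23;   38;   26;   23;   39;   50;   50;   49;   50;  276;  -29];
      [:: -140; -114; -128; -112; -136; -133;   16;   18;    6;   16;   19;    5;   39;   26;   23;   38;   26;   23;   50;   50;   50;   49;  276;  -29];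
      [:: -128; -140; -114; -133; -112; -136;    5;   16;   18;    6;   16;   19;   23;   39;   26;   23;   38;   26;   50;   50;   49;   50;  276;  -29];
      [::  295;  282;  325;  295;  325;  282;  -45;  -25;  -25;  -45;  -25;  -25;  -77;  -53;  -77;  -77;  -53;  -77; -118; -118; -118; -118; -653;   69];
      [::  325;  295;  282;  282;  295;  325;  -25;  -45;  -25;  -25;  -45;  -25;  -77;  -77;  -53;  -77;  -77;  -53; -118; -118; -118; -118; -653;   69];
      [::  282;  325;  295;  325;  282;  295;  -25;  -25;  -45;  -25;  -25;  -45;  -53;  -77;  -77;  -53;  -77;  -77; -118; -118; -118; -118; -653;   69];
      [:: -703; -699; -712; -703; -712; -699;   78;   72;   72;   78;   72;   72;  164;  157;  164;  164;  157;  164;  276;  276;  276;  276; 1530; -161];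
      [:: -712; -703; -699; -699; -703; -712;   72;   78;   72;   72;   78;   72;  164;  164;  157;  164;  164;  157;  276;  276;  276;  276; 1530; -161];
      [:: -699; -712; -703; -712; -699; -703;   72;   72;   78;   72;   72;   78;  157;  164;  164;  157;  164;  164;  276;  276;  276;  276; 1530; -161];
      [::  104;  104;  104;  105;  105;  105;  -11;  -11;  -11;  -11;  -11;  -11;  -24;  -24;  -24;  -24;  -24;  -24;  -40;  -40;  -42;  -42; -227;   24];
      [::  105;  105;  105;  104;  104;  104;  -11;  -11;  -11;  -11;  -11;  -11;  -24;  -24;  -24;  -24;  -24;  -24;  -42;  -42;  -40;  -40; -227;   24];
      [::  157;  157;  157;  157;  157;  157;  -17;  -16;  -17;  -16;  -17;  -16;  -36;  -36;  -36;  -36;  -36;  -36;  -62;  -61;  -62;  -61; -341;   36];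
      [::  157;  157;  157;  157;  157;  157;  -16;  -17;  -16;  -17;  -16;  -17;  -36;  -36;  -36;  -36;  -36;  -36;  -61;  -62;  -61;  -62; -341;   36];
      [::  438;  438;  438;  438;  438;  438;  -46;  -46;  -46;  -46;  -46;  -46; -101; -100; -101; -100; -101; -100; -171; -172; -172; -171; -951;  100];
      [::  438;  438;  438;  438;  438;  438;  -46;  -46;  -46;  -46;  -46;  -46; -100; -101; -100; -101; -100; -101; -172; -171; -171; -172; -951;  100]].

Local Close Scope int_scope.

Definition entry (T : seq (seq int)) (b a : nat) : int := nth 0%R (nth [::] T b) a.

Lemma dih1 : dih 1%N = r6. Proof. by rewrite /dih expg0 mulg1 expg1. Qed.
Lemma dih2 : dih 2 = r6 ^+ 2. Proof. by rewrite /dih expg0 mulg1. Qed.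
Lemma dih3 : dih 3 = r6 ^+ 3. Proof. by rewrite /dih expg0 mulg1. Qed.
Lemma dih6 : dih 6 = s6. Proof. by rewrite /dih expg0 mul1g expg1. Qed.
Lemma dih7 : dih 7 = r6 * s6. Proof. by rewrite /dih !expg1. Qed.

Local Close Scope group_scope.

Theorem proposition6p3 :
  let r := r6 in let s := s6 in
  let C2_1 := <[(r ^+ 3)%g]>%g in
  let C2_2 := <[s]>%g in
  let C2_3 := <[(r * s)%g]>%g in
  let C3 := <[(r ^+ 2)%g]>%g in
  let C2xC2 := <<[set (r ^+ 3)%g; s]>>%g in
  let C6 := <[r]>%g in
  let S3_1 := <<[set (r ^+ 2)%g; s]>>%g in
  let S3_2 := <<[set (r ^+ 2)%g; (r * s)%g]>>%g in
  G_lattice_iso D6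
    [:: [1 {perm 'I_6}]%g; C2xC2; C2xC2; C6; S3_1; S3_2]
    [:: C2_1; C2_2; C2_3; C3; D6; D6].
Proof.
move=> /=.
apply: (D6_table_iso (gensH := gensX) (memsH := memsX) (ptsH := ptsX)
                     (gensK := gensY) (memsK := memsY) (ptsK := ptsY)
                     (M := entry matrix_M) (N := entry matrix_N)).
- by rewrite /= code_subgroup0 !code_subgroup1 !code_subgroup2 dih1 dih2 dih3 dih6 dih7.
- by rewrite /= !code_subgroup1 !code_subgroup2 dih1 dih2 dih3 dih6 dih7.
all: by vm_compute.
Qed.
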